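(* Let $\vartheta\in(0,1)$, let $c,r$ be positive integers and $\alpha,\beta$ positive integers, and consider the single-agent trust model described in the context. If $\vartheta< c/(c+r)$, then $p_{\rm quit}=\mathbb{P}(\tau<\infty)=1$, i.e. $\tau<\infty$ almost surely.
   Context: Single-agent trust model: $\vartheta$ is the institution's true trustworthiness; $(X_t)_{t\in\mathbb{N}}$ are i.i.d. with $\mathbb{P}(X_t=1)=\vartheta$, $\mathbb{P}(X_t=0)=1-\vartheta$. The agent has actions $A_t\in\{0,1\}$ and observes $X_t$ only in rounds with $A_t=1$. Let $\hat S_t=\sum_{s=1}^t X_s\mathbf{1}_{\{A_s=1\}}$, $\hat F_t=\sum_{s=1}^t(1-X_s)\mathbf{1}_{\{A_s=1\}}$ (so $\hat S_0=\hat F_0=0$), and $\hat\vartheta_t=\frac{\alpha+\hat S_t}{\alpha+\beta+\hat S_t+\hat F_t}$ (the posterior mean under a Beta$(\alpha,\beta)$ prior). The agent acts myopically: $A_t=1$ if $r\hat\vartheta_n-c(1-\hat\vartheta_n)\ge 0$ for all $n\in\{0,1,\dots,t-1\}$, and $A_t=0$ otherwise. The quitting time is $\tau:=\inf\{t\in\mathbb{N}\cup\{\infty\}: r\hat\vartheta_t-c(1-\hat\vartheta_t)<0\}$ and $p_{\rm quit}:=\mathbb{P}(\tau<\infty)$. *)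

From HB Require Import structures.
From mathcomp Require Import all_boot all_order all_algebra.
From mathcomp Require Import all_classical all_reals all_analysis.
Set Implicit Arguments. Unset Strict Implicit. Unset Printing Implicit Defensive.
Import Order.TTheory GRing.Theory Num.Theory.
Local Open Scope classical_set_scope.
Local Open Scope ring_scope.

Definition mutually_independent_rvs {d} {T : measurableType d} {R : realType}
  (P : probability T R) (X : nat -> T -> R) : Prop :=
  forall (s : seq nat) (B : nat -> set R),
    uniq s -> (forall i, measurable (B i)) ->
    P (\bigcap_(i in [set` s]) (X i @^-1` B i)) =
    (\prod_(i <- s) P (X i @^-1` B i))%E.

Section Model.
Variables (R : realType) (alpha beta r c : R).

(* posterior mean under a Beta(alpha,beta) prior *)
Definition post_mean (S0 F0 : R) : R := (alpha + S0) / (alpha + beta + S0 + F0).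

Definition trusts (th : R) : bool := 0 <= r * th - c * (1 - th).

(* Given the realized outcomes x, where x s is X_{s+1} (round s+1),
   model_state x t = (hat S_t, hat F_t, A_{t+1}), where
   A_{t+1} = 1 iff trusts(hat theta_n) for all n in {0,...,t}. *)
Fixpoint model_state (x : nat -> R) (t : nat) : R * R * bool :=
  match t with
  | 0 => (0, 0, trusts (post_mean 0 0))
  | t'.+1 =>
      let: (S0, F0, a) := model_state x t' in
      let S' := if a then S0 + x t' else S0 in
      let F' := if a then F0 + (1 - x t') else F0 in
      (S', F', a && trusts (post_mean S' F'))
  end.

(* A_t (for t >= 1; A_0 is unused) *)
Definition act (x : nat -> R) (t : nat) : bool :=
  match t with 0 => true | t'.+1 => (model_state x t').2 end.
Definition Shat (x : nat -> R) (t : nat) : R := (model_state x t).1.1.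
Definition Fhat (x : nat -> R) (t : nat) : R := (model_state x t).1.2.
Definition theta_hat (x : nat -> R) (t : nat) : R := post_mean (Shat x t) (Fhat x t).

Definition quits (x : nat -> R) : Prop :=
  exists t : nat, r * theta_hat x t - c * (1 - theta_hat x t) < 0.

End Model.

(* Until its first distrust the agent acts in every round, so it sees every
   outcome and quits as soon as the full success count S_t = X_1 + ... + X_t
   drops below the line c/(c+r) (alpha + beta + t) - alpha, whose slope exceeds
   theta = E[X_t].  On the event that the agent never quits (and every X_t is 0
   or 1), S_t stays above this line for all t.  Pairwise independence gives
   Var S_t = t theta (1 - theta), so by Chebyshev this event has probability
   O(1/t) for every t, hence probability 0. *)

From HB Require Import structures.
From mathcomp Require Import all_boot all_order all_algebra.
From mathcomp Require Import all_classical all_reals all_analysis.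
From mathcomp Require Import measurable_realfun ring lra.
Import Order.TTheory GRing.Theory Num.Theory.
Local Open Scope classical_set_scope.
Local Open Scope ring_scope.

Section informed_trust.
Context {R : realType} (a b r c : R).

Definition successes (x : nat -> R) (t : nat) : R := \sum_(s < t) x s.
Definition failures (x : nat -> R) (t : nat) : R := \sum_(s < t) (1 - x s).
Definition trusts_informed (x : nat -> R) (t : nat) : bool :=
  trusts r c (post_mean a b (successes x t) (failures x t)).

Lemma model_state_informed x t :
    (forall n, (n < t)%N -> trusts_informed x n) ->
  model_state a b r c x t = (successes x t, failures x t, trusts_informed x t).
Proof.
elim: t => [|t IH] trusted.
  by rewrite /= /trusts_informed /successes /failures !big_ord0.
rewrite /= IH => [|n ltnt]; last exact/trusted/ltnW.
by rewrite trusted // /trusts_informed /successes /failures !big_ord_recr.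
Qed.

Lemma quitsP x : quits a b r c x <-> exists t, ~~ trusts_informed x t.
Proof.
split=> [[t distrust_t]|/ex_minnP[t distrust_t first_t]]; last first.
  exists t; rewrite /theta_hat /Shat /Fhat model_state_informed /=.
    by move: distrust_t; rewrite /trusts_informed /trusts ltNge.
  by move=> n ltnt; apply/negPn/negP => /first_t; rewrite leqNgt ltnt.
apply/not_existsP => /= always; move: distrust_t.
rewrite /theta_hat /Shat /Fhat model_state_informed => [|n _]; last exact/negPn/negP/always.
by move: (always t) => /negP/negPn; rewrite /trusts_informed /trusts /= ltNge => ->.
Qed.

Definition quit_threshold (t : nat) : R := c / (c + r) * (a + b + t%:R) - a.

Lemma quit_thresholdE t :
  quit_threshold t = c / (c + r) * t%:R + (c / (c + r) * (a + b) - a).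
Proof. by rewrite /quit_threshold; ring. Qed.

End informed_trust.

Section trust_threshold.
Context {R : realType} {a b r c : R}.
Hypotheses (cr_gt0 : 0 < c + r) (ab_gt0 : 0 < a + b).

Lemma trusts_informedE x t :
  trusts_informed a b r c x t = (quit_threshold a b r c t <= successes x t).
Proof.
rewrite /trusts_informed /trusts /post_mean /quit_threshold.
have -> : failures x t = t%:R - successes x t by rewrite /failures sumrB sumr_const card_ord.
set S := successes x t; set D := a + b + t%:R.
have D_gt0 : 0 < D by rewrite /D ltr_wpDr.
have -> : a + b + S + (t%:R - S) = D by rewrite /D; ring.
have -> : r * ((a + S) / D) - c * (1 - (a + S) / D) = ((c + r) * (a + S) - c * D) / D.
  by field; rewrite gt_eqF.
rewrite pmulr_lge0 ?invr_gt0 // subr_ge0 lerBlDr mulrAC ler_pdivrMr //.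
by rewrite [_ * (c + r)]mulrC [S + a]addrC.
Qed.

Lemma quits_below_threshold x :
  quits a b r c x <-> exists t, successes x t < quit_threshold a b r c t.
Proof.
rewrite quitsP.
by split=> -[t tx]; exists t; move: tx; rewrite trusts_informedE // -ltNge.
Qed.

End trust_threshold.

Lemma measurable_quits {d} {T : measurableType d} {R : realType} {a b r c : R}
    (X : nat -> {mfun T >-> R}) : 0 < c + r -> 0 < a + b ->
  measurable [set w | quits a b r c (fun s => X s w)].
Proof.
move=> cr_gt0 ab_gt0.
rewrite (_ : [set w | _] =
    \bigcup_t [set w | successes (fun s => X s w) t < quit_threshold a b r c t]).
  apply: bigcupT_measurable => t; under eq_set do rewrite /successes -mfun_sum.
  by rewrite -preimage_itvNyo; exact: measurable_funPTI.
apply/seteqP; split=> [w /(quits_below_threshold cr_gt0 ab_gt0) [t lt_t]|w [t _ lt_t]].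
  by exists t.
by apply/(quits_below_threshold cr_gt0 ab_gt0); exists t.
Qed.

Lemma quadratic_le_linear_eq0 {R : realType} (k b q : R) : 0 < k -> 0 <= q ->
  (forall t : nat, 0 < k * t%:R + b -> q * (k * t%:R + b) ^+ 2 <= t%:R) -> q = 0.
Proof.
move=> k_gt0 q_ge0 bound; apply/eqP; rewrite eq_le q_ge0 andbT leNgt; apply/negP => q_gt0.
have kq_gt0 : 0 < k ^+ 2 * q by rewrite mulr_gt0 ?exprn_gt0.
have bk_ge0 : 0 <= 2 * `|b| / k by rewrite divr_ge0 // ltW.
have qk_ge0 : 0 <= 4 / (k ^+ 2 * q) by rewrite divr_ge0 // ltW.
(* Any t beyond 2|b|/k + 4/(k^2 q) has k t + b >= k t / 2 and k^2 q t > 4,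
   hence q (k t + b)^2 > t. *)
have := archi_boundP (addr_ge0 bk_ge0 qk_ge0).
set t := Num.Def.archi_bound _ => t_large.
have t_gt0 : 0 < t%:R :> R by lra.
have b_small : 2 * `|b| < k * t%:R by rewrite -ltr_pdivrMl // mulrC; lra.
have q_large : 4 < k ^+ 2 * q * t%:R by rewrite -ltr_pdivrMl // mulrC; lra.
have := ler_norm (- b); rewrite normrN => Nb_le.
have half_gt0 : 0 < k * t%:R / 2 by have := normr_ge0 b; lra.
have half_le : k * t%:R / 2 <= k * t%:R + b by lra.
have : (k * t%:R / 2) ^+ 2 <= (k * t%:R + b) ^+ 2 by rewrite lerXn2r ?nnegrE; lra.
have := bound t (lt_le_trans half_gt0 half_le).
nra.
Qed.

Section nonnegative_variance.
Context {d} {T : measurableType d} {R : realType} {P : probability T R}.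
Local Open Scope ereal_scope.

Lemma ge0_varianceE {X : {RV P >-> R}} {m1 m2 : R} : (forall w, 0 <= X w)%R ->
  'E_P[X] = m1%:E -> 'E_P[fun w => X w ^+ 2]%R = m2%:E -> 'V_P[X] = (m2 - m1 ^+ 2)%:E.
Proof.
move=> X_ge0 EX EX2.
have m1_ge0 : (0 <= m1)%R.
  by rewrite -lee_fin -EX expectation_ge0.
rewrite /variance unlock EX /=; rewrite unlock in EX EX2.
have sqr_dev_integral : \int[P]_w (((X w - m1) * (X w - m1))%:E) + (2 * m1 * m1)%:E =
    m2%:E + (m1 ^+ 2)%:E.
{ rewrite EFinM -EX -EX2 -ge0_integralZl_EFin ?mulr_ge0 //.
  rewrite -[X in _ = _ + X]mule1 -(probability_setT P) -integral_cst //.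
  rewrite -!ge0_integralD //.
  - by apply: eq_integral => w _; rewrite -EFinM -!EFinD; congr EFin; ring.
  - by move=> w _; rewrite lee_fin sqr_ge0.
  - exact/measurable_EFinP/measurable_funX.
  - by move=> w _; rewrite lee_fin sqr_ge0.
  - by move=> w _; rewrite lee_fin -expr2 sqr_ge0.
  - by apply/measurable_EFinP; apply: measurable_funM; apply: measurable_funB.
  - by move=> w _; rewrite -EFinM lee_fin !mulr_ge0.
  - exact/measurable_EFinP/measurable_funM.
  - by move=> w _; rewrite lee_fin.
  - exact/measurable_EFinP. }
rewrite unlock.
move: sqr_dev_integral; have : 0 <= \int[P]_w (((X w - m1) * (X w - m1))%:E).
  by apply: integral_ge0 => w _; rewrite lee_fin -expr2 sqr_ge0.
case: (\int[P]_w _) => [v| |] //= _ /eqP; rewrite -!EFinD eqe => /eqP v_eq.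
by congr EFin; lra.
Qed.
End nonnegative_variance.

Lemma integral_sum_indic d (T : measurableType d) (R : realType)
    (mu : {measure set T -> \bar R}) (I : Type) (s : seq I) (F : I -> set T) :
    (forall i, measurable (F i)) ->
  (\int[mu]_w (\sum_(i <- s) \1_(F i) w)%:E = \sum_(i <- s) mu (F i))%E.
Proof.
move=> mF; under eq_integral do rewrite -sumEFin.
rewrite ge0_integral_sum // => [|i].
- by apply: eq_bigr => i _; rewrite integral_indic // setIT.
- exact/measurable_EFinP/measurable_indic.
Qed.

Section pairwise_independent_events.
Context {d} {T : measurableType d} {R : realType} {P : probability T R}.
Context {theta : R} {E : nat -> set T}.
Hypothesis mE : forall i, measurable (E i).
Hypothesis PE : forall i, P (E i) = theta%:E.
Hypothesis PEI : forall i j, i != j -> P (E i `&` E j) = (theta ^+ 2)%:E.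

Definition occurrences (t : nat) : {mfun T >-> R} := \sum_(i < t) indic_mfun _ (mE i).

Lemma occurrencesE t w : occurrences t w = \sum_(i < t) \1_(E i) w.
Proof. exact: mfun_sum. Qed.

Lemma occurrences_ge0 t w : 0 <= occurrences t w.
Proof. by rewrite occurrencesE sumr_ge0. Qed.

Lemma expectation_occurrences t : ('E_P[occurrences t] = (t%:R * theta)%:E)%E.
Proof.
rewrite unlock; under eq_integral do rewrite occurrencesE.
rewrite integral_sum_indic // (eq_bigr (fun=> theta%:E)) => [|i _]; last exact: PE.
by rewrite sumEFin sumr_const card_ord mulr_natl.
Qed.

Lemma occurrences_sqrE t w :
  occurrences t w ^+ 2 = \sum_(p : 'I_t * 'I_t) \1_(E p.1 `&` E p.2) w.
Proof.
rewrite occurrencesE expr2 mulr_suml; under eq_bigr do rewrite mulr_sumr.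
by rewrite pair_bigA; apply: eq_bigr => p _; rewrite indicI.
Qed.

Lemma expectation_occurrences_sqr t :
  ('E_P[fun w => (occurrences t w ^+ 2)%R] =
   (t%:R * theta + t%:R * (t%:R - 1) * theta ^+ 2)%:E)%E.
Proof.
rewrite unlock; under eq_integral do rewrite occurrences_sqrE.
rewrite integral_sum_indic => [|p]; last exact: measurableI.
rewrite (eq_bigr (fun p => (if p.1 == p.2 then theta else theta ^+ 2)%:E)).
  rewrite sumEFin -(pair_bigA _ (fun i j => if i == j then theta else theta ^+ 2)) /=.
  under eq_bigr => i _.
    rewrite (bigD1 i) //= eqxx (eq_bigr (fun=> theta ^+ 2)) => [|j /negbTE]; last first.
      by rewrite eq_sym => ->.
    rewrite sumr_const cardC1 card_ord.
    over.
  rewrite sumr_const card_ord; congr EFin.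
  case: t => [|n]; first by rewrite mulr0n !mul0r addr0.
  by rewrite -[theta ^+ 2 *+ n]mulr_natl -[_ *+ n.+1]mulr_natl -natr1; ring.
move=> [i j] _ /=; case: eqVneq => [<-|/PEI //]; by rewrite setIid PE.
Qed.

Lemma variance_occurrences t :
  ('V_P[occurrences t] = (t%:R * theta * (1 - theta))%:E)%E.
Proof.
rewrite (ge0_varianceE (occurrences_ge0 t) (expectation_occurrences t)
  (expectation_occurrences_sqr t)).
by congr EFin; ring.
Qed.

Lemma occurrences_deviation t (eps : R) : 0 < eps ->
  (P [set w | eps <= `|occurrences t w - t%:R * theta|]%R <=
   (eps ^- 2 * (t%:R * theta * (1 - theta)))%:E)%E.
Proof.
move=> eps_gt0; have := @chebyshev _ _ _ P (occurrences t) _ eps_gt0.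
by rewrite expectation_occurrences variance_occurrences -EFinM.
Qed.

Lemma occurrences_above_line_null (A : set T) (k b : R) :
    measurable A -> theta < k ->
    (forall t w, A w -> k * t%:R + b <= occurrences t w) ->
  P A = 0%E.
Proof.
move=> mA theta_lt_k above.
have PA : P A = (fine (P A))%:E by rewrite fineK ?fin_num_measure.
rewrite PA; congr EFin.
apply: (quadratic_le_linear_eq0 (k - theta) b) => [||t D_gt0].
- by rewrite subr_gt0.
- exact/fine_ge0/measure_ge0.
set D := (k - theta) * t%:R + b.
have mdev : measurable [set w | D <= `|occurrences t w - t%:R * theta|].
  rewrite -preimage_itvcy -[_ @^-1` _]setTI; apply: (measurableT_comp _ _) => //.
  exact: measurable_funB.
have dev : A `<=` [set w | D <= `|occurrences t w - t%:R * theta|].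
  move=> w Aw; apply: le_trans (ler_norm _); rewrite lerBrDr.
  have -> : D + t%:R * theta = k * t%:R + b by rewrite /D; ring.
  exact: above.
have : (P A <= (D ^- 2 * (t%:R * theta * (1 - theta)))%:E)%E.
  exact: le_trans (le_measure P (mem_set mA) (mem_set mdev) dev)
    (occurrences_deviation t _ D_gt0).
rewrite PA lee_fin => /(ler_wpM2r (ltW (exprn_gt0 2 D_gt0))).
rewrite mulrAC mulVf ?gt_eqF ?exprn_gt0 // mul1r => /le_trans; apply.
have t_ge0 := ler0n R t.
by have := mulr_ge0 t_ge0 (sqr_ge0 (1 - 2 * theta)); nra.
Qed.

End pairwise_independent_events.

Lemma occurrences_binary d (T : measurableType d) (R : realType)
    (X : nat -> T -> R) (mE : forall i, measurable [set w | X i w = 1]) t w :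
    (forall s, X s w = 0 \/ X s w = 1) ->
  occurrences mE t w = successes (fun s => X s w) t.
Proof.
move=> bin_w; rewrite occurrencesE; apply: eq_bigr => s _; rewrite indicE.
case: (bin_w s) => [X0|X1]; last by rewrite mem_set.
rewrite memNset; first exact: esym X0.
by rewrite /= X0 => /eqP; rewrite eq_sym oner_eq0.
Qed.

Lemma probability1_negligible {d} {T : measurableType d} {R : realType}
    {P : probability T R} {A B : set T} :
  measurable A -> P.-negligible (~` B) -> P.-negligible (~` A `&` B) -> P A = 1%E.
Proof.
move=> mA nB nAB; have PnA : P (~` A) = 0%E.
  apply/negligibleP; first exact: measurableC.
  apply: (@negligibleS _ _ _ P ((~` A `&` B) `|` ~` B)); last exact: negligibleU.
  by move=> w nAw; have [Bw|] := pselect (B w); [left|right].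
rewrite -[A]setCK probability_setC; last exact: measurableC.
by rewrite [P _]PnA sube0.
Qed.

Lemma mutually_independent_rvs_pair d (T : measurableType d) (R : realType)
    (P : probability T R) (X : nat -> T -> R) (B : set R) i j :
  mutually_independent_rvs P X -> measurable B -> i != j ->
  P (X i @^-1` B `&` X j @^-1` B) = (P (X i @^-1` B) * P (X j @^-1` B))%E.
Proof.
move=> indep mB neq_ij.
have := indep [:: i; j] (fun=> B); rewrite /= inE neq_ij big_cons big_seq1.
move=> /(_ isT (fun=> mB)) <-; congr (P _); apply/seteqP; split=> [w [Xi Xj] k|w Xij].
- by rewrite /= !inE => /orP[] /eqP ->.
- by split; apply: Xij; rewrite /= !inE eqxx ?orbT.
Qed.

Lemma negligible_nonbinary {d} {T : measurableType d} {R : realType} {P : probability T R}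
    {X : nat -> {RV P >-> R}} {theta : R} :
  (forall t, P [set w | X t w = 1] = theta%:E) ->
  (forall t, P [set w | X t w = 0] = (1 - theta)%:E) ->
  P.-negligible (~` \bigcap_t (X t @^-1` [set 0; 1])).
Proof.
move=> PX1 PX0; rewrite setC_bigcap; apply: negligible_bigcup => t.
have m01 : measurable (X t @^-1` [set 0; 1]).
  by apply: measurable_funPTI; apply: measurableU; apply: measurable_set1.
have P01 : P (X t @^-1` [set 0; 1]) = 1%E.
  rewrite preimage_setU measureU; last 3 first.
  - exact: measurable_funPTI.
  - exact: measurable_funPTI.
  - by apply/seteqP; split=> // w [/= -> /esym/eqP]; rewrite oner_eq0.
  transitivity (P [set w | X t w = 0%R] + P [set w | X t w = 1%R])%E; first by [].
  by rewrite PX0 PX1 -EFinD subrK.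
apply/negligibleP; first exact: measurableC.
by rewrite -[LHS]/(P _) probability_setC // P01 subee.
Qed.

Theorem lemma3p1 (d : measure_display) (T : measurableType d) (R : realType)
  (P : probability T R) (theta : R) (c r alpha beta : nat)
  (X : nat -> {RV P >-> R}) :
  0 < theta < 1 ->
  (0 < c)%N -> (0 < r)%N -> (0 < alpha)%N -> (0 < beta)%N ->
  mutually_independent_rvs P (fun t => X t : T -> R) ->
  (forall t, P [set w | X t w = 1] = theta%:E) ->
  (forall t, P [set w | X t w = 0] = (1 - theta)%:E) ->
  theta < c%:R / (c%:R + r%:R) ->
  P [set w | quits alpha%:R beta%:R r%:R c%:R (fun s => X s w)] = 1%E.
Proof.
move=> _ c_gt0 r_gt0 alpha_gt0 beta_gt0 indep PX1 PX0 theta_lt.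
have cr_gt0 : 0 < c%:R + r%:R :> R by rewrite ltr_wpDr ?ltr0n.
have ab_gt0 : 0 < alpha%:R + beta%:R :> R by rewrite ltr_wpDr ?ltr0n.
set quit := [set w | _].
have mquit : measurable quit := measurable_quits X cr_gt0 ab_gt0.
pose E i := [set w | X i w = 1].
have mE i : measurable (E i) := measurable_funPTI (X i) (measurable_set1 1).
have PEI i j : i != j -> P (E i `&` E j) = (theta ^+ 2)%:E.
  move=> neq_ij; transitivity (P (E i) * P (E j))%E.
    exact: mutually_independent_rvs_pair indep (measurable_set1 1) neq_ij.
  by rewrite !PX1 -EFinM.
pose binary := \bigcap_t X t @^-1` [set 0; 1].
have mbinary : measurable binary.
  apply: bigcapT_measurable => t; apply: measurable_funPTI.
  by apply: measurableU; apply: measurable_set1.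
have mstay : measurable (~` quit `&` binary) by apply: measurableI => //; exact: measurableC.
apply: (probability1_negligible mquit (negligible_nonbinary PX1 PX0)).
apply/negligibleP => //.
apply: (occurrences_above_line_null mE PX1 PEI _ _
  (c%:R / (c%:R + r%:R) * (alpha%:R + beta%:R) - alpha%:R) mstay theta_lt).
move=> t w [/= not_quit bin_w].
rewrite occurrences_binary => [|s]; last exact: bin_w.
rewrite -quit_thresholdE leNgt; apply/negP => below; apply: not_quit.
by apply/(quits_below_threshold cr_gt0 ab_gt0); exists t.
Qed.
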